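(* For all $n\geq 1$ and $m\geq 2$, \[2\bar{a}_m(n)=\bar{a}_{m-1}(2n,n).\]
   Context: An overpartition of $n$ is a partition of $n$ in which the first occurrence of each distinct part value may be overlined; an overlined part and a non-overlined part of the same value count as equal. $\bar{a}_m(n)$ is the number of overpartitions of $n$ in which the smallest part value occurs at least $m$ times, and $\bar{a}_m(N,\ell)$ is the number of overpartitions of $N$ in which the smallest part value occurs at least $m$ times and the largest part minus the smallest part equals $\ell$. *)

From mathcomp Require Import all_boot.
Set Implicit Arguments. Unset Strict Implicit. Unset Printing Implicit Defensive.

(* An overpartition of N is encoded by its multiplicity data: for each part
   value v (0 <= v <= N), a pair (multiplicity of v, whether the first
   occurrence of v is overlined).  Multiplicities of positive parts of a
   partition of N are at most N, so 'I_N.+1 suffices. *)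
Definition opdata (N : nat) := {ffun 'I_N.+1 -> 'I_N.+1 * bool}.

Definition mult N (f : opdata N) (v : 'I_N.+1) : nat := (f v).1.
Definition overlined N (f : opdata N) (v : 'I_N.+1) : bool := (f v).2.

Definition is_overpartition N (f : opdata N) : bool :=
  [&& [forall v : 'I_N.+1, (v == 0 :> nat) ==> (mult f v == 0) && ~~ overlined f v],
      [forall v : 'I_N.+1, overlined f v ==> (0 < mult f v)] &
      \sum_(v < N.+1) v * mult f v == N].

Definition is_smallest_part N (f : opdata N) (s : 'I_N.+1) : bool :=
  (0 < mult f s) && [forall v : 'I_N.+1, (v < s) ==> (mult f v == 0)].

Definition is_largest_part N (f : opdata N) (l : 'I_N.+1) : bool :=
  (0 < mult f l) && [forall v : 'I_N.+1, (l < v) ==> (mult f v == 0)].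

Definition abar (m N : nat) : nat :=
  #|[set f : opdata N | is_overpartition f &&
      [exists s : 'I_N.+1, is_smallest_part f s && (m <= mult f s)]]|.

Definition abar2 (m N l : nat) : nat :=
  #|[set f : opdata N | is_overpartition f &&
      [exists s : 'I_N.+1, exists t : 'I_N.+1,
         [&& is_smallest_part f s, is_largest_part f t, m <= mult f s &
             (t - s == l)%N]]]|.

From mathcomp Require Import all_boot zify.
Set Implicit Arguments. Unset Strict Implicit. Unset Printing Implicit Defensive.

(* Remove one copy of the smallest part s of an overpartition of n, which
   occurs at least m >= 2 times and so stays the smallest part, and add a new
   part s + n, overlined or not: this gives an overpartition of 2n whose
   largest part exceeds its smallest part by n.  Conversely, in such an
   overpartition of 2n the largest part s + n exceeds n, hence occurs exactly
   once and is the only part above n, so removing it and restoring a copy of s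
   inverts the map.  The factor 2 is the choice of overline on the new part. *)

Lemma sum_mul_delta (K a : nat) : a < K -> \sum_(v < K) v * (v == a :> nat) = a.
Proof.
move=> aK; rewrite (bigD1 (Ordinal aK)) //= eqxx muln1 big1 ?addn0 // => v.
by rewrite -val_eqE /= => /negbTE ->; rewrite muln0.
Qed.

Lemma leq_sum_term (K u : nat) (F : nat -> nat) : u < K -> F u <= \sum_(v < K) F v.
Proof. by move=> uK; rewrite (bigD1 (Ordinal uK)) //= leq_addr. Qed.

Lemma leq_sum_pair (K u w : nat) (F : nat -> nat) :
  u < K -> w < K -> u != w -> F u + F w <= \sum_(v < K) F v.
Proof.
move=> uK wK uw; rewrite (bigD1 (Ordinal uK)) //= (bigD1 (Ordinal wK)) /=.
  by rewrite addnA leq_addr.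
by rewrite -val_eqE /= eq_sym.
Qed.

Lemma card_in_bij (T U : finType) (A : {set T}) (B : {set U}) (f : T -> U) (g : U -> T) :
  {in A, forall x, f x \in B} -> {in B, forall y, g y \in A} ->
  {in A, cancel f g} -> {in B, cancel g f} -> #|A| = #|B|.
Proof.
move=> fAB gBA fK gK; rewrite -(card_in_imset (can_in_inj fK)); apply: eq_card => y.
apply/imsetP/idP => [[x xA ->] | yB]; first exact: fAB.
by exists (g y); rewrite ?gK ?gBA.
Qed.

(* [nu] is [mu] with one part [s] exchanged for a part [t]. *)
Definition trade_part (mu nu : nat -> nat) (s t : nat) : Prop :=
  forall v, nu v + (v == s) = mu v + (v == t).

Section TradePart.
Variables (mu nu : nat -> nat) (s t : nat).
Hypothesis trade : trade_part mu nu s t.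

Lemma trade_part_other v : v != s -> v != t -> nu v = mu v.
Proof. by move=> vs vt; have := trade v; rewrite (negbTE vs) (negbTE vt) !addn0. Qed.

Lemma trade_part_src : s != t -> mu s = (nu s).+1.
Proof. by move=> st; have := trade s; rewrite eqxx (negbTE st) addn0 addn1. Qed.

Lemma trade_part_dst : s != t -> nu t = (mu t).+1.
Proof. by move=> st; have := trade t; rewrite eqxx eq_sym (negbTE st) addn0 addn1. Qed.

Lemma trade_part_weight K : s < K -> t < K ->
  \sum_(v < K) v * nu v + s = \sum_(v < K) v * mu v + t.
Proof.
move=> sK tK; rewrite -[s in LHS](sum_mul_delta sK) -[t in RHS](sum_mul_delta tK).
by rewrite -!big_split; apply: eq_bigr => v _; rewrite /= -!mulnDr trade.
Qed.

End TradePart.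

Definition min_part (mu : nat -> nat) (s : nat) : Prop :=
  0 < mu s /\ forall v, v < s -> mu v = 0.

Definition max_part (mu : nat -> nat) (t : nat) : Prop :=
  0 < mu t /\ forall v, t < v -> mu v = 0.

Lemma min_part_uniq mu s s' : min_part mu s -> min_part mu s' -> s = s'.
Proof.
move=> [mus lts] [mus' lts']; case: (ltngtP s s') => [/lts' e | /lts e | //].
- by rewrite e in mus.
- by rewrite e in mus'.
Qed.

Lemma min_part_gt0 mu s : mu 0 = 0 -> min_part mu s -> 0 < s.
Proof. by move=> mu0 [mus _]; case: s mus => //; rewrite mu0. Qed.

Lemma min_part_le_max_part mu s t : min_part mu s -> max_part mu t -> s <= t.
Proof. by move=> [_ lts] [mut _]; rewrite leqNgt; apply/negP => /lts e; rewrite e in mut. Qed.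

Lemma trade_part_min mu nu s t : s < t -> trade_part mu nu s t ->
  min_part nu s <-> 1 < mu s /\ min_part mu s.
Proof.
move=> st trade; have s_neq_t : s != t by rewrite ltn_eqF.
have same v : v < s -> nu v = mu v.
  by move=> vs; apply: (trade_part_other trade); rewrite ltn_eqF // (ltn_trans vs).
rewrite /min_part (trade_part_src trade s_neq_t) ltnS.
split=> [[nus below] | [nus [_ below]]].
  by split=> //; split=> // v vs; rewrite -same ?below.
by split=> // v vs; rewrite same ?below.
Qed.

Definition multn N (f : opdata N) (v : nat) : nat :=
  if v <= N then mult f (inord v) else 0.

Definition overlinedn N (f : opdata N) (v : nat) : bool :=
  (v <= N) && overlined f (inord v).

Definition opdata_of N (mu : nat -> nat) (ov : nat -> bool) : opdata N :=
  [ffun v : 'I_N.+1 => (inord (mu v), ov v)].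

Section OpdataViews.
Variable N : nat.
Implicit Types (f : opdata N) (mu : nat -> nat) (ov : nat -> bool).

Lemma multnE f (v : 'I_N.+1) : multn f v = mult f v.
Proof. by rewrite /multn -ltnS ltn_ord inord_val. Qed.

Lemma overlinednE f (v : 'I_N.+1) : overlinedn f v = overlined f v.
Proof. by rewrite /overlinedn -ltnS ltn_ord inord_val. Qed.

Lemma multn_le f v : multn f v <= N.
Proof. by rewrite /multn; case: ifP => // _; rewrite -ltnS ltn_ord. Qed.

Lemma multn_out f v : N < v -> multn f v = 0.
Proof. by rewrite /multn ltnNge => /negbTE ->. Qed.

Lemma overlinedn_out f v : N < v -> overlinedn f v = false.
Proof. by rewrite /overlinedn ltnNge => /negbTE ->. Qed.

Lemma multn_gt0_le f v : 0 < multn f v -> v <= N.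
Proof. by case: (leqP v N) => // /multn_out ->. Qed.

Lemma opdata_of_multn f : opdata_of N (multn f) (overlinedn f) = f.
Proof.
apply/ffunP => v; rewrite ffunE multnE overlinednE /mult /overlined inord_val.
by case: (f v).
Qed.

Lemma eq_opdata_of mu mu' ov ov' :
  mu =1 mu' -> ov =1 ov' -> opdata_of N mu ov = opdata_of N mu' ov'.
Proof. by move=> emu eov; apply/ffunP => v; rewrite !ffunE emu eov. Qed.

Lemma multn_opdata_of mu ov : (forall v, mu v <= N) -> (forall v, N < v -> mu v = 0) ->
  multn (opdata_of N mu ov) =1 mu.
Proof.
move=> mu_le mu_out v; rewrite /multn; case: leqP => [vN | /mu_out //].
by rewrite /mult ffunE /= !inordK ?ltnS.
Qed.

Lemma overlinedn_opdata_of mu ov : (forall v, N < v -> ov v = false) ->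
  overlinedn (opdata_of N mu ov) =1 ov.
Proof.
move=> ov_out v; rewrite /overlinedn; case: leqP => [vN | /ov_out //].
by rewrite /overlined ffunE /= inordK ?ltnS.
Qed.

Lemma sum_multn f K : N < K ->
  \sum_(v < K) v * multn f v = \sum_(v < N.+1) v * multn f v.
Proof.
move=> NK; rewrite [RHS](big_ord_widen _ (fun v => v * multn f v) NK) [RHS]big_mkcond /=.
apply: eq_bigr => v _.
by case: ltnP => // /multn_out ->; rewrite muln0.
Qed.

Lemma is_overpartitionP f :
  reflect [/\ multn f 0 = 0, forall v, overlinedn f v -> 0 < multn f v
            & \sum_(v < N.+1) v * multn f v = N]
          (is_overpartition f).
Proof.
have sumE : \sum_(v < N.+1) v * mult f v = \sum_(v < N.+1) v * multn f v.
  by apply: eq_bigr => v _; rewrite multnE.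
rewrite /is_overpartition sumE.
apply: (iffP and3P) => [[/forallP P0 /forallP Pov /eqP Psum] | [P0 Pov Psum]]; split=> //.
- by rewrite (multnE f ord0); have /implyP/(_ isT)/andP[/eqP] := P0 ord0.
- by move=> v /andP[vN ov]; have /implyP/(_ ov) := Pov (inord v); rewrite /multn vN.
- apply/forallP => v; apply/implyP => /eqP v0.
  have mv0 : mult f v = 0 by rewrite -multnE v0.
  rewrite mv0 eqxx /=; apply/negP => ov.
  by have := Pov v; rewrite overlinednE multnE mv0 => /(_ ov).
- by apply/forallP => v; apply/implyP; rewrite -overlinednE -multnE; exact: Pov.
- exact/eqP.
Qed.

Lemma is_smallest_partP f (s : 'I_N.+1) :
  reflect (min_part (multn f) s) (is_smallest_part f s).
Proof.
rewrite /is_smallest_part -multnE.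
apply: (iffP andP) => [[ms /forallP below] | [ms below]]; split=> //.
- move=> v vs; have vN : v <= N by rewrite -ltnS (ltn_trans vs).
  by have /implyP := below (inord v); rewrite inordK ?ltnS // /multn vN => /(_ vs)/eqP.
- by apply/forallP => v; apply/implyP => /below; rewrite multnE => ->.
Qed.

Lemma is_largest_partP f (t : 'I_N.+1) :
  reflect (max_part (multn f) t) (is_largest_part f t).
Proof.
rewrite /is_largest_part -multnE.
apply: (iffP andP) => [[mt /forallP above] | [mt above]]; split=> //.
- move=> v tv; case: (leqP v N) => [vN | /multn_out //].
  by have /implyP := above (inord v); rewrite inordK ?ltnS // /multn vN => /(_ tv)/eqP.
- by apply/forallP => v; apply/implyP => /above; rewrite multnE => ->.
Qed.

Definition least_part f : nat :=
  if [pick s | is_smallest_part f s] is Some s then val s else 0.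

Lemma least_partE f s : min_part (multn f) s -> least_part f = s.
Proof.
move=> Hs; have sN : s <= N by apply: (multn_gt0_le Hs.1).
rewrite /least_part; case: pickP => [s' /is_smallest_partP Hs' | none].
  exact: min_part_uniq Hs' Hs.
have /is_smallest_partP : min_part (multn f) (inord s : 'I_N.+1) by rewrite inordK.
by rewrite none.
Qed.

Lemma overpartition_two_parts f u w : is_overpartition f -> u != w ->
  u * multn f u + w * multn f w <= N.
Proof.
case/is_overpartitionP => _ _ sumN uw.
rewrite -[X in _ <= X]sumN -(@sum_multn f (u + w + N).+1); last lia.
by apply: (leq_sum_pair (fun v => v * multn f v)) => //; lia.
Qed.

End OpdataViews.

Definition abar_set m N : {set opdata N} :=
  [set f : opdata N | is_overpartition f &&
      [exists s : 'I_N.+1, is_smallest_part f s && (m <= mult f s)]].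

Definition abar2_set m N l : {set opdata N} :=
  [set f : opdata N | is_overpartition f &&
      [exists s : 'I_N.+1, exists t : 'I_N.+1,
         [&& is_smallest_part f s, is_largest_part f t, m <= mult f s &
             (t - s == l)%N]]].

Lemma abar_setP m N (f : opdata N) :
  reflect (is_overpartition f /\ exists2 s, min_part (multn f) s & m <= multn f s)
          (f \in abar_set m N).
Proof.
rewrite inE; apply: (iffP andP) => [[P /existsP [s]] | [P [s Hs ms]]].
  by case/andP => /is_smallest_partP Hs; rewrite -multnE => ms; split=> //; exists s.
have sN : s <= N by apply: (multn_gt0_le Hs.1).
split=> //; apply/existsP; exists (inord s); rewrite -multnE inordK // ms andbT.
by apply/is_smallest_partP; rewrite inordK.
Qed.

Lemma abar2_setP m N l (f : opdata N) :
  reflect (is_overpartition f /\ exists s,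
             [/\ min_part (multn f) s, max_part (multn f) (s + l) & m <= multn f s])
          (f \in abar2_set m N l).
Proof.
rewrite inE; apply: (iffP andP) => [[P /existsP [s /existsP [t]]] | [P [s [Hs Ht ms]]]].
  case/and4P => /is_smallest_partP Hs /is_largest_partP Ht ms /eqP ts.
  split=> //; exists s; rewrite -ts subnKC ?(min_part_le_max_part Hs Ht) //.
  by rewrite multnE.
have sN : s <= N by apply: (multn_gt0_le Hs.1).
have tN : s + l <= N by apply: (multn_gt0_le Ht.1).
split=> //; apply/existsP; exists (inord s); apply/existsP; exists (inord (s + l)).
rewrite -multnE !inordK // ms addKn eqxx !andbT.
by apply/andP; split; [apply/is_smallest_partP | apply/is_largest_partP]; rewrite inordK.
Qed.

Section LiftSmallestPart.
Variables m n : nat.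
Hypotheses (n_gt0 : 0 < n) (m_gt1 : 1 < m).

Definition lift_part (x : opdata n * bool) : opdata (2 * n) :=
  let s := least_part x.1 in
  opdata_of (2 * n) (fun v => multn x.1 v + (v == s + n) - (v == s))
    (fun v => if v == s + n then x.2 else overlinedn x.1 v).

Definition drop_part (g : opdata (2 * n)) : opdata n * bool :=
  let s := least_part g in
  (opdata_of n (fun v => multn g v + (v == s) - (v == s + n))
     (fun v => (v <= n) && overlinedn g v),
   overlinedn g (s + n)).

Definition lifts_part (x : opdata n * bool) (s : nat) (g : opdata (2 * n)) : Prop :=
  trade_part (multn x.1) (multn g) s (s + n) /\
  forall v, overlinedn g v = if v == s + n then x.2 else overlinedn x.1 v.

Lemma lift_part_lifts x s : is_overpartition x.1 -> min_part (multn x.1) s ->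
  lifts_part x s (lift_part x).
Proof.
move=> /is_overpartitionP [f0 _ _] Hs; have s_gt0 := min_part_gt0 f0 Hs.
have sn := multn_gt0_le Hs.1; have ms := Hs.1.
rewrite /lift_part (least_partE Hs); split=> v.
- rewrite multn_opdata_of => [|u|u u_gt]; last by rewrite multn_out; lia.
    by case: (eqVneq v s) => [-> | _]; lia.
  by have := multn_le x.1 u; lia.
rewrite overlinedn_opdata_of // => u u_gt; rewrite ifN ?overlinedn_out //; lia.
Qed.

Lemma parts_above_n (g : opdata (2 * n)) s :
  is_overpartition g -> min_part (multn g) s -> 0 < multn g (s + n) ->
  s < n /\ forall v, n < v -> multn g v = (v == s + n).
Proof.
move=> P Hs mt; have [g0 _ _] := is_overpartitionP _ P.
have s_gt0 := min_part_gt0 g0 Hs; have ms := Hs.1.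
have two_parts := overpartition_two_parts P.
have s_neq_t : s != s + n by rewrite ltn_eqF //; lia.
have := two_parts s (s + n) s_neq_t; split; first nia.
move=> v nv; case: (eqVneq v (s + n)) => [-> | vt]; first nia.
by have := two_parts (s + n) v; rewrite eq_sym vt => /(_ isT); nia.
Qed.

Lemma drop_part_lifts g s :
  is_overpartition g -> min_part (multn g) s -> max_part (multn g) (s + n) ->
  lifts_part (drop_part g) s g.
Proof.
move=> P Hs [mt _]; have [g0 gov gsum] := is_overpartitionP _ P.
have [sn above] := parts_above_n P Hs mt; have s_gt0 := min_part_gt0 g0 Hs.
set nu := fun v => multn g v + (v == s) - (v == s + n).
have nu_out v : n < v -> nu v = 0.
  by move=> nv; rewrite /nu above //; lia.
have trade : trade_part nu (multn g) s (s + n).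
  by move=> v; rewrite /nu subnK //; case: eqP => [-> | _] //; rewrite ltn_addr.
have nu_le v : nu v <= n.
  have := trade_part_weight trade (K := (2 * n).+1); rewrite gsum => wt.
  case: (posnP v) => [-> | v_gt0]; first by rewrite /nu g0; lia.
  case: (ltnP n v) => [/nu_out -> // | vn].
  apply: leq_trans (leq_pmull _ v_gt0) _.
  have := leq_sum_term (fun u => u * nu u) (_ : v < (2 * n).+1); lia.
rewrite /drop_part (least_partE Hs); split=> v /=.
- by rewrite multn_opdata_of.
rewrite overlinedn_opdata_of => [|u nu_gt]; last by rewrite leqNgt nu_gt.
case: eqP => [-> // | /eqP vt]; case: leqP => // nv.
by apply/negP => /gov; rewrite above // (negbTE vt).
Qed.

Lemma lifts_part_fwd x s g : lifts_part x s g ->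
  is_overpartition x.1 -> min_part (multn x.1) s -> m <= multn x.1 s ->
  [/\ is_overpartition g, min_part (multn g) s, max_part (multn g) (s + n)
    & m.-1 <= multn g s].
Proof.
move=> [trade ov] /is_overpartitionP [f0 fov fsum] Hs ms.
have s_gt0 := min_part_gt0 f0 Hs; have sn := multn_gt0_le Hs.1.
have st : s < s + n by lia.
have s_neq_t : s != s + n by rewrite ltn_eqF.
have mus := trade_part_src trade s_neq_t; have mut := trade_part_dst trade s_neq_t.
have same := trade_part_other trade.
split.
- apply/is_overpartitionP; split.
  + by rewrite same ?f0 //; lia.
  + move=> v; rewrite ov; case: eqP => [-> _ | /eqP vt /fov]; first by rewrite mut.
    by case: (eqVneq v s) => [-> | vs]; [lia | rewrite same].
  + have := trade_part_weight trade (K := (2 * n).+1).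
    by rewrite (sum_multn (K := (2 * n).+1) x.1) ?fsum; lia.
- by apply/(trade_part_min st trade); split=> //; lia.
- by split=> [|v tv]; rewrite ?mut // same ?multn_out //; lia.
- lia.
Qed.

Lemma lifts_part_bwd x s g : lifts_part x s g ->
  is_overpartition g -> min_part (multn g) s -> m.-1 <= multn g s ->
  [/\ is_overpartition x.1, min_part (multn x.1) s & m <= multn x.1 s].
Proof.
move=> [trade ov] /is_overpartitionP [g0 gov gsum] Hs ms.
have s_gt0 := min_part_gt0 g0 Hs; have s2n := multn_gt0_le Hs.1.
have st : s < s + n by lia.
have s_neq_t : s != s + n by rewrite ltn_eqF.
have mus := trade_part_src trade s_neq_t; have same := trade_part_other trade.
split.
- apply/is_overpartitionP; split.
  + by rewrite -same ?g0 //; lia.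
  + move=> v fv; have vn : v <= n by case/andP: fv.
    have := gov v; rewrite ov ifN ?fv => [/(_ isT) | ]; last lia.
    by case: (eqVneq v s) => [-> | vs]; rewrite ?mus // -same //; lia.
  + have := trade_part_weight trade (K := (3 * n).+1).
    by rewrite (sum_multn (K := (3 * n).+1) g) ?(sum_multn (K := (3 * n).+1) x.1) ?gsum; lia.
- by have [] := (trade_part_min st trade).1 Hs.
- lia.
Qed.

Lemma lifts_part_lift x s g : lifts_part x s g -> least_part x.1 = s ->
  lift_part x = g.
Proof.
move=> [trade ov] sE; rewrite /lift_part sE -(opdata_of_multn g).
by apply: eq_opdata_of => v; rewrite ?ov // -trade addnK.
Qed.

Lemma lifts_part_drop x s g : lifts_part x s g -> least_part g = s -> 0 < s ->
  drop_part g = x.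
Proof.
case: x => f b [/= trade ov] sE s_gt0; rewrite /drop_part sE ov eqxx.
congr pair; rewrite -[RHS]opdata_of_multn; apply: eq_opdata_of => v.
  by rewrite trade addnK.
rewrite ov; case: eqP => [-> | _]; last by case: leqP => // /overlinedn_out ->.
by rewrite overlinedn_out leqNgt; lia.
Qed.

Lemma lift_part_in x : x.1 \in abar_set m n -> lift_part x \in abar2_set m.-1 (2 * n) n.
Proof.
case/abar_setP => P [s Hs ms].
have [Pg Hg Hmax mg] := lifts_part_fwd (lift_part_lifts P Hs) P Hs ms.
by apply/abar2_setP; split=> //; exists s.
Qed.

Lemma drop_part_in g : g \in abar2_set m.-1 (2 * n) n -> (drop_part g).1 \in abar_set m n.
Proof.
case/abar2_setP => P [s [Hs Hmax ms]].
have [Pf Hf mf] := lifts_part_bwd (drop_part_lifts P Hs Hmax) P Hs ms.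
by apply/abar_setP; split=> //; exists s.
Qed.

Lemma lift_partK x : x.1 \in abar_set m n -> drop_part (lift_part x) = x.
Proof.
case/abar_setP => P [s Hs ms]; have lifted := lift_part_lifts P Hs.
have [_ Hg _ _] := lifts_part_fwd lifted P Hs ms.
have [f0 _ _] := is_overpartitionP _ P.
exact: lifts_part_drop lifted (least_partE Hg) (min_part_gt0 f0 Hs).
Qed.

Lemma drop_partK g : g \in abar2_set m.-1 (2 * n) n -> lift_part (drop_part g) = g.
Proof.
case/abar2_setP => P [s [Hs Hmax ms]]; have lifted := drop_part_lifts P Hs Hmax.
have [_ Hf _] := lifts_part_bwd lifted P Hs ms.
exact: lifts_part_lift lifted (least_partE Hf).
Qed.

End LiftSmallestPart.

Theorem theorem5p3 (n m : nat) (hn : 1 <= n) (hm : 2 <= m) :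
  2 * abar m n = abar2 m.-1 (2 * n) n.
Proof.
have -> : 2 * abar m n = #|setX (abar_set m n) [set: bool]|.
  by rewrite cardsX cardsT card_bool mulnC.
have -> : abar2 m.-1 (2 * n) n = #|abar2_set m.-1 (2 * n) n| by [].
apply: (card_in_bij (f := @lift_part n) (g := @drop_part n)).
- by move=> [f b] /setXP [fA _]; exact: (lift_part_in hn hm).
- by move=> g gB; rewrite [drop_part g]surjective_pairing in_setX in_setT (drop_part_in hn hm).
- by move=> [f b] /setXP [fA _]; exact: (lift_partK hn hm).
- exact: (drop_partK hn hm).
Qed.
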